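(* Let $G$ be a completable graph and let $A(G)$ and $B(G)$ be $G$-partial positive definite matrices. Then $$\mathfrak{p}^+[A(G)-B(G)]\subset\mathfrak{p}^+[A(G)]-\mathfrak{p}^+[B(G)]:=\{M-N: M\in\mathfrak{p}^+[A(G)],\ N\in\mathfrak{p}^+[B(G)]\}.$$
   Context: A graph $G=(V,E)$ is a finite undirected graph on $V=\{1,\dots,n\}$ containing all loops. A $G$-partial matrix has entries specified exactly for $\{i,j\}\in E$; a completion is an $n\times n$ matrix agreeing with it on $E$. Differences of $G$-partial matrices are taken entrywise on $E$. A $G$-partial matrix $[a_{ij}]_G$ is partial positive definite if $a_{ji}=\overline{a_{ij}}$ on $E$ and every principal submatrix indexed by a clique of $G$ is positive definite. $G$ is completable if every $G$-partial positive semidefinite matrix has a positive semidefinite completion (equivalently $G$ is chordal). $\mathfrak{p}^+[A(G)]$ denotes the set of positive definite completions of $A(G)$. *)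

From mathcomp Require Import all_boot all_order all_algebra.
Set Implicit Arguments. Unset Strict Implicit. Unset Printing Implicit Defensive.
Import Order.TTheory GRing.Theory Num.Theory.
Local Open Scope ring_scope.

Definition is_graph (n : nat) (e : rel 'I_n) : Prop :=
  (forall i, e i i) /\ (forall i j, e i j = e j i).

(* A G-partial matrix is represented by a full n x n matrix whose entries
   outside the edge set E are irrelevant (never used). *)

Definition ctr (C : numClosedFieldType) (m p : nat) (A : 'M[C]_(m, p)) : 'M[C]_(p, m) :=
  map_mx Num.conj (A^T).

Definition hermitian (C : numClosedFieldType) (m : nat) (A : 'M[C]_m) : Prop :=
  ctr A = A.

Definition posdef (C : numClosedFieldType) (m : nat) (A : 'M[C]_m) : Prop :=
  hermitian A /\ forall v : 'cV[C]_m, v != 0 -> 0 < (ctr v *m A *m v) 0 0.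

Definition possemidef (C : numClosedFieldType) (m : nat) (A : 'M[C]_m) : Prop :=
  hermitian A /\ forall v : 'cV[C]_m, 0 <= (ctr v *m A *m v) 0 0.

Definition clique (n : nat) (e : rel 'I_n) (S : {set 'I_n}) : Prop :=
  forall i j, i \in S -> j \in S -> e i j.

Definition principal_sub (C : numClosedFieldType) (n : nat) (S : {set 'I_n})
  (A : 'M[C]_n) : 'M[C]_#|S| :=
  mxsub (@enum_val _ (mem S)) (@enum_val _ (mem S)) A.

Definition partial_hermitian (C : numClosedFieldType) (n : nat) (e : rel 'I_n)
  (A : 'M[C]_n) : Prop :=
  forall i j, e i j -> A j i = Num.conj (A i j).

Definition partial_posdef (C : numClosedFieldType) (n : nat) (e : rel 'I_n)
  (A : 'M[C]_n) : Prop :=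
  partial_hermitian e A /\
  forall S : {set 'I_n}, clique e S -> posdef (principal_sub S A).

Definition partial_possemidef (C : numClosedFieldType) (n : nat) (e : rel 'I_n)
  (A : 'M[C]_n) : Prop :=
  partial_hermitian e A /\
  forall S : {set 'I_n}, clique e S -> possemidef (principal_sub S A).

Definition completion (C : numClosedFieldType) (n : nat) (e : rel 'I_n)
  (A M : 'M[C]_n) : Prop :=
  forall i j, e i j -> M i j = A i j.

Definition completable (C : numClosedFieldType) (n : nat) (e : rel 'I_n) : Prop :=
  forall A : 'M[C]_n, partial_possemidef e A ->
    exists M : 'M[C]_n, completion e A M /\ possemidef M.

Definition pd_completions (C : numClosedFieldType) (n : nat) (e : rel 'I_n)
  (A : 'M[C]_n) : 'M[C]_n -> Prop :=
  fun M => completion e A M /\ posdef M.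

(* Each positive definite principal submatrix B[S] dominates (its least
   eigenvalue) times the identity, so, G having finitely many cliques, some
   d > 0 makes B(G) - dI partial positive semidefinite.  Completability yields
   a positive semidefinite completion Q0 of B(G) - dI; then Q = Q0 + dI is a
   positive definite completion of B(G), and for every positive definite
   completion M of A(G) - B(G), P = M + Q is a positive definite completion of
   A(G) with M = P - Q. *)

From mathcomp Require Import all_boot all_order all_algebra spectral.
Import Order.TTheory GRing.Theory Num.Theory.
Local Open Scope ring_scope.
Set Implicit Arguments. Unset Strict Implicit. Unset Printing Implicit Defensive.

Lemma uniform_pos_witness (R : numDomainType) (T : finType) (P : pred T)
    (good : T -> R -> Prop) :
  (forall t d d', good t d -> 0 < d' -> d' <= d -> good t d') ->
  (forall t, P t -> exists2 d, 0 < d & good t d) ->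
  exists2 d, 0 < d & forall t, P t -> good t d.
Proof.
move=> good_le good_ex.
suff [d d_gt0 good_enum] :
    exists2 d, 0 < d & forall t, t \in enum T -> P t -> good t d.
  by exists d => // t; apply: good_enum; rewrite mem_enum.
elim: (enum T) => [|x s [d d_gt0 good_s]]; first by exists 1.
have [dx dx_gt0 good_x] : exists2 dx, 0 < dx & P x -> good x dx.
  by case: (boolP (P x)) => [/good_ex [dx ? ?]|/negP Px]; [exists dx | exists 1].
have good_cons d' : 0 < d' -> d' <= dx -> d' <= d ->
    forall t, t \in x :: s -> P t -> good t d'.
  move=> d'_gt0 le_dx le_d t; rewrite inE => /orP [/eqP -> Px|ts Pt].
    exact: good_le (good_x Px) d'_gt0 le_dx.
  exact: good_le (good_s t ts Pt) d'_gt0 le_d.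
have [le_dx_d|lt_d_dx] := real_leP (gtr0_real dx_gt0) (gtr0_real d_gt0).
  by exists dx => //; apply: good_cons.
by exists d => //; apply: good_cons => //; apply: ltW.
Qed.

Section HermitianForms.
Variable C : numClosedFieldType.

Lemma ctr_mul m p q (X : 'M[C]_(m, p)) (Y : 'M[C]_(p, q)) :
  ctr (X *m Y) = ctr Y *m ctr X.
Proof. by rewrite /ctr trmx_mul map_mxM. Qed.

Lemma ctrK m p (X : 'M[C]_(m, p)) : ctr (ctr X) = X.
Proof. by apply/matrixP => i j; rewrite !mxE conjCK. Qed.

Lemma ctrD m p (X Y : 'M[C]_(m, p)) : ctr (X + Y) = ctr X + ctr Y.
Proof. by apply/matrixP => i j; rewrite !mxE rmorphD. Qed.

Lemma ctr_scalar m (a : C) : ctr (a%:M : 'M_m) = a^*%:M.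
Proof. by apply/matrixP => i j; rewrite !mxE rmorphMn eq_sym. Qed.

Definition qform m (X : 'M[C]_m) (v : 'cV[C]_m) : C := (ctr v *m X *m v) 0 0.

Lemma qformD m (X Y : 'M[C]_m) v : qform (X + Y) v = qform X v + qform Y v.
Proof. by rewrite /qform mulmxDr mulmxDl mxE. Qed.

Lemma qform_conjmx m (P X : 'M[C]_m) v :
  qform (ctr P *m X *m P) v = qform X (P *m v).
Proof. by rewrite /qform ctr_mul !mulmxA. Qed.

Lemma qform_diag m (d : 'rV[C]_m) v :
  qform (diag_mx d) v = \sum_i d 0 i * `|v i 0| ^+ 2.
Proof.
rewrite /qform mul_mx_diag !mxE; apply: eq_bigr => i _.
by rewrite !mxE normCKC mulrAC mulrC mulrA.
Qed.

Lemma qform_diag_delta m (d : 'rV[C]_m) i :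
  qform (diag_mx d) (delta_mx i 0) = d 0 i.
Proof.
rewrite qform_diag (bigD1 i) //= big1 ?addr0 => [|j /negPf ji].
  by rewrite mxE !eqxx /= normr1 expr1n mulr1.
by rewrite mxE ji /= normr0 expr0n mulr0.
Qed.

Lemma qform_scalar m (a : C) (v : 'cV[C]_m) :
  qform a%:M v = a * \sum_i `|v i 0| ^+ 2.
Proof.
by rewrite -diag_const_mx qform_diag mulr_sumr; apply: eq_bigr => i _; rewrite mxE.
Qed.

Lemma sum_sqr_norm_gt0 m (v : 'cV[C]_m) : v != 0 -> 0 < \sum_i `|v i 0| ^+ 2.
Proof.
move=> v_neq0; have [i vi_neq0] : exists i, v i 0 != 0.
  apply/existsP; apply: contraR v_neq0 => /existsPn v0.
  by apply/eqP/matrixP => i j; rewrite ord1 mxE; apply/eqP/negPn.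
rewrite (bigD1 i) //= ltr_pwDl ?exprn_gt0 ?normr_gt0 //.
by rewrite sumr_ge0 // => j _; apply: exprn_ge0.
Qed.

Lemma hermitian_scalar m (a : C) : a \is Num.real -> hermitian (a%:M : 'M_m).
Proof. by move=> a_real; rewrite /hermitian ctr_scalar (conj_Creal a_real). Qed.

Lemma hermitianD m (X Y : 'M[C]_m) :
  hermitian X -> hermitian Y -> hermitian (X + Y).
Proof. by rewrite /hermitian ctrD => -> ->. Qed.

Lemma posdef_possemidef m (X : 'M[C]_m) : posdef X -> possemidef X.
Proof.
case=> X_herm X_pos; split=> // v; have [->|v_neq0] := eqVneq v 0.
  by rewrite mulmx0 mxE.
exact/ltW/X_pos.
Qed.

Lemma possemidefD m (X Y : 'M[C]_m) :
  possemidef X -> possemidef Y -> possemidef (X + Y).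
Proof.
case=> X_herm X_nneg [Y_herm Y_nneg]; split; first exact: hermitianD.
by move=> v; rewrite -/(qform _ _) qformD addr_ge0 ?X_nneg ?Y_nneg.
Qed.

Lemma possemidef_posdefD m (X Y : 'M[C]_m) :
  possemidef X -> posdef Y -> posdef (X + Y).
Proof.
case=> X_herm X_nneg [Y_herm Y_pos]; split; first exact: hermitianD.
by move=> v v_neq0; rewrite -/(qform _ _) qformD ltr_wpDl ?X_nneg ?Y_pos.
Qed.

Lemma posdefD m (X Y : 'M[C]_m) : posdef X -> posdef Y -> posdef (X + Y).
Proof. by move/posdef_possemidef; apply: possemidef_posdefD. Qed.

Lemma posdef_scalar m (a : C) : 0 < a -> posdef (a%:M : 'M_m).
Proof.
move=> a_gt0; split; first exact/hermitian_scalar/gtr0_real.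
by move=> v v_neq0; rewrite -/(qform _ _) qform_scalar mulr_gt0 ?sum_sqr_norm_gt0.
Qed.

Lemma possemidef_diag m (d : 'rV[C]_m) :
  (forall i, 0 <= d 0 i) -> possemidef (diag_mx d).
Proof.
move=> d_ge0; split.
  apply/matrixP => i j; rewrite !mxE eq_sym.
  by case: eqP => [->|_]; rewrite ?mulr1n ?geC0_conj // !mulr0n conjC0.
move=> v; rewrite -/(qform _ _) qform_diag sumr_ge0 // => i _.
by rewrite mulr_ge0 ?exprn_ge0.
Qed.

Lemma possemidef_scalar m (a : C) : 0 <= a -> possemidef (a%:M : 'M_m).
Proof.
by move=> a_ge0; rewrite -diag_const_mx; apply: possemidef_diag => i; rewrite mxE.
Qed.

Lemma possemidef_conjmx m (P X : 'M[C]_m) :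
  possemidef X -> possemidef (ctr P *m X *m P).
Proof.
case=> X_herm X_nneg; split.
  by rewrite /hermitian !ctr_mul ctrK X_herm mulmxA.
by move=> v; rewrite -/(qform _ _) qform_conjmx; apply: X_nneg.
Qed.

Lemma possemidef_subr_scalar_le m (X : 'M[C]_m) (a b : C) :
  possemidef (X - a%:M) -> b <= a -> possemidef (X - b%:M).
Proof.
move=> Xa_psd le_ba; have -> : X - b%:M = (X - a%:M) + (a - b)%:M.
  by rewrite raddfB addrA subrK.
by apply: possemidefD Xa_psd _; apply: possemidef_scalar; rewrite subr_ge0.
Qed.

Lemma hermitian_unitary_diag m (K : 'M[C]_m) : hermitian K ->
  exists P (d : 'rV[C]_m),
    [/\ P *m ctr P = 1%:M, ctr P *m P = 1%:M & K = ctr P *m diag_mx d *m P].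
Proof.
move=> K_herm; have K_normal : K \is normalmx.
  by apply/normalmxP; change (K *m ctr K = ctr K *m K); rewrite K_herm.
have P_unitary := spectral_unitarymx K.
have PU : spectralmx K *m ctr (spectralmx K) = 1%:M by apply/unitarymxP.
exists (spectralmx K), (spectral_diag K); split => //; first exact: mulmx1C.
by move/orthomx_spectralP: K_normal; rewrite invmx_unitary.
Qed.

Lemma posdef_sub_scalar m (K : 'M[C]_m) :
  posdef K -> exists2 d, 0 < d & possemidef (K - d%:M).
Proof.
case=> K_herm K_pos; have [P [d [PU UP K_eq]]] := hermitian_unitary_diag K_herm.
have d_gt0 i : 0 < d 0 i.
  have u_neq0 : ctr P *m (delta_mx i 0 : 'cV_m) != 0.
    apply/eqP => /(congr1 (mulmx P)); rewrite mulmxA PU mul1mx mulmx0.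
    by move/matrixP/(_ i 0); rewrite !mxE !eqxx /= => /eqP; rewrite oner_eq0.
  have := K_pos _ u_neq0; rewrite -/(qform _ _) K_eq qform_conjmx.
  by rewrite mulmxA PU mul1mx qform_diag_delta.
have [δ δ_gt0 δ_le] := @uniform_pos_witness C _ predT (fun i δ => δ <= d 0 i)
  (fun i a b le_a _ le_ba => le_trans le_ba le_a)
  (fun i _ => ex_intro2 _ _ (d 0 i) (d_gt0 i) (lexx _)).
exists δ => //; have -> : K - δ%:M = ctr P *m diag_mx (d - const_mx δ) *m P.
  by rewrite linearB /= diag_const_mx mulmxBr mulmxBl -K_eq mul_mx_scalar
    -scalemxAl UP scalemx1.
by apply/possemidef_conjmx/possemidef_diag => i; rewrite !mxE subr_ge0 δ_le.
Qed.

End HermitianForms.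

Section PartialMatrices.
Variables (C : numClosedFieldType) (n : nat) (e : rel 'I_n).

Lemma cliqueP (S : {set 'I_n}) :
  reflect (clique e S) [forall i in S, forall j in S, e i j].
Proof.
apply: (iffP forall_inP) => [S_clique i j iS jS | S_clique i iS].
  by move/forall_inP: (S_clique i iS); apply.
by apply/forall_inP => j jS; apply: S_clique.
Qed.

Lemma principal_sub_subr_scalar (S : {set 'I_n}) (X : 'M[C]_n) (a : C) :
  principal_sub S (X - a%:M) = principal_sub S X - a%:M.
Proof. by apply/matrixP => i j; rewrite !mxE (inj_eq enum_val_inj). Qed.

Lemma partial_hermitian_subr_scalar (X : 'M[C]_n) (a : C) :
  a \is Num.real -> partial_hermitian e X -> partial_hermitian e (X - a%:M).
Proof.
move=> a_real X_herm i j eij.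
rewrite !mxE X_herm // eq_sym rmorphB rmorphMn.
by congr (_ - _ *+ _); apply/esym/conj_Creal.
Qed.

Lemma partial_posdef_sub_scalar (X : 'M[C]_n) :
  partial_posdef e X -> exists2 d, 0 < d & partial_possemidef e (X - d%:M).
Proof.
case=> X_herm X_pd.
have [d d_gt0 X_cliques] := @uniform_pos_witness C _
  (fun S : {set 'I_n} => [forall i in S, forall j in S, e i j])
  (fun S d => possemidef (principal_sub S X - d%:M))
  (fun S a b Sa_psd _ le_ba => possemidef_subr_scalar_le Sa_psd le_ba)
  (fun S S_clique => posdef_sub_scalar (X_pd S (elimT (cliqueP S) S_clique))).
exists d => //; split.
  exact: partial_hermitian_subr_scalar (gtr0_real d_gt0) X_herm.
by move=> S /cliqueP S_clique; rewrite principal_sub_subr_scalar; apply: X_cliques.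
Qed.

Lemma completionD (X Y M N : 'M[C]_n) :
  completion e X M -> completion e Y N -> completion e (X + Y) (M + N).
Proof. by move=> XM YN i j eij; rewrite !mxE XM ?YN. Qed.

End PartialMatrices.

Theorem lemma5p4 (C : numClosedFieldType) (n : nat) (e : rel 'I_n)
  (A B : 'M[C]_n) :
  is_graph e -> completable C e ->
  partial_posdef e A -> partial_posdef e B ->
  forall M : 'M[C]_n, pd_completions e (A - B) M ->
    exists P Q : 'M[C]_n,
      pd_completions e A P /\ pd_completions e B Q /\ M = P - Q.
Proof.
move=> _ complete _ B_pd M [M_compl M_pd].
have [d d_gt0 Bd_psd] := partial_posdef_sub_scalar B_pd.
have [Q0 [Q0_compl Q0_psd]] := complete _ Bd_psd.
pose Q := Q0 + d%:M.
have Q_compl : completion e B Q.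
  by move=> i j eij; rewrite !mxE Q0_compl // !mxE subrK.
have Q_pd : posdef Q := possemidef_posdefD Q0_psd (posdef_scalar _ d_gt0).
exists (M + Q), Q; split; [split | split => //]; last by rewrite addrK.
- by have := completionD M_compl Q_compl; rewrite subrK.
- exact: posdefD.
Qed.
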